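(* Let $\lambda$ be a partition with at most $n$ parts and $b=x_1\otimes\cdots\otimes x_n\in E_\lambda$. Let $Z_b$ be the set of $i\in\{1,\dots,n-1\}$ such that exactly one of $x_i,x_{i+1}$ is barred. Then $$\sum_{i\in Z_b}(n-i)\bigl(1-2H(x_i\otimes x_{i+1})\bigr)=\frac{n-|\lambda|}{2}.$$
   Context: Let $\mathcal{C}_n$ be the ordered alphabet $1<2<\cdots<n<\bar n<\overline{n-1}<\cdots<\bar1$; letters $k$ are unbarred, letters $\bar k$ barred; $\mathrm{wt}(k)=\varepsilon_k$, $\mathrm{wt}(\bar k)=-\varepsilon_k$ ($\varepsilon_k$ standard basis of $\mathbb{Z}^n$). $E_\lambda$ is the set of words $x_1\otimes\cdots\otimes x_n$ over $\mathcal{C}_n$ such that each partial sum $w_i=\sum_{j\le i}\mathrm{wt}(x_j)$ ($1\le i\le n$) is a partition (weakly decreasing, nonnegative) and $w_n=\lambda$. $|\lambda|=\sum\lambda_i$. For letters $x,y$, $H(x\otimes y)=1$ if $x\ge y$ and $0$ if $x<y$. *)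

From mathcomp Require Import all_boot all_order all_algebra.
Set Implicit Arguments. Unset Strict Implicit. Unset Printing Implicit Defensive.
Import Order.TTheory GRing.Theory Num.Theory.

(* Letters of the alphabet C_n: [Unb k] is k, [Bar k] is \bar k (1 <= k <= n). *)
Inductive letter := Unb of nat | Bar of nat.

Definition barred (x : letter) : bool := if x is Bar _ then true else false.

Definition letter_index (x : letter) : nat := match x with Unb k => k | Bar k => k end.

Definition valid_letter (n : nat) (x : letter) : bool :=
  (1 <= letter_index x <= n)%N.

Definition letter_lt (x y : letter) : bool :=
  match x, y with
  | Unb i, Unb j => (i < j)%N
  | Unb _, Bar _ => true
  | Bar _, Unb _ => false
  | Bar i, Bar j => (j < i)%N
  end.

Definition Hfun (x y : letter) : int := if letter_lt x y then 0 else 1.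

Definition wt_coord (x : letter) (k : nat) : int :=
  match x with
  | Unb j => Posz (j == k)
  | Bar j => - Posz (j == k)
  end%R.

Definition dflt_letter : letter := Unb 0.

Definition partial_wt (x : seq letter) (i k : nat) : int :=
  (\sum_(j < i) wt_coord (nth dflt_letter x j) k)%R.

Definition is_partition_vec (n : nat) (v : nat -> int) : Prop :=
  (forall k, (1 <= k < n)%N -> (v k.+1 <= v k)%R) /\ (0 <= v n)%R.

Definition partition_atmost (n : nat) (lam : seq nat) : Prop :=
  sorted geq lam /\ 0 \notin lam /\ (size lam <= n)%N.

Definition in_E (n : nat) (lam : seq nat) (x : seq letter) : Prop :=
  size x = n /\ all (valid_letter n) x /\
  (forall i, (1 <= i <= n)%N -> is_partition_vec n (partial_wt x i)) /\
  (forall k, (1 <= k <= n)%N -> partial_wt x n k = Posz (nth 0 lam k.-1)).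

From mathcomp Require Import all_boot all_order all_algebra.
From mathcomp Require Import zify ring.
Set Implicit Arguments. Unset Strict Implicit. Unset Printing Implicit Defensive.
Import Order.TTheory GRing.Theory Num.Theory.
Local Open Scope ring_scope.

(* Let u_j be 1 if x_j is unbarred and 0 otherwise. When exactly one of x_i, x_(i+1) is
   barred, the unbarred one is the smaller letter, so 1 - 2 H(x_i ⊗ x_(i+1)) = u_i - u_(i+1);
   for the other i this difference is 0. The sum is therefore the Abel sum
   Σ_i (n - i)(u_i - u_(i+1)) = n u_1 - Σ_j u_j. Since w_1 = wt(x_1) is a partition, x_1 is
   unbarred and u_1 = 1; summing the coordinates of w_n = λ gives |λ| = Σ_j (2 u_j - 1). *)

Lemma sumr_weighted_diffs (V : zmodType) (f : nat -> V) n :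
  \sum_(1 <= i < n) (f i.-1 - f i) *+ (n - i) = f 0%N *+ n - \sum_(0 <= j < n) f j.
Proof.
elim: n => [|n IHn]; first by rewrite !big_geq // subr0.
have telescope : \sum_(1 <= i < n.+1) (f i.-1 - f i) = f 0%N - f n.
  rewrite big_add1 /= (telescope_sumr_eq (fun k => - f k)) //.
    by rewrite opprK addrC.
  by move=> k _; rewrite opprK addrC.
rewrite (eq_big_nat _ _ (F2 := fun i => (f i.-1 - f i) *+ (n - i) + (f i.-1 - f i)));
  last by move=> i /andP[_ lt_in]; rewrite subSn // mulrSr.
have drop_last : \sum_(1 <= i < n.+1) (f i.-1 - f i) *+ (n - i) =
                 \sum_(1 <= i < n) (f i.-1 - f i) *+ (n - i).
  case: n {IHn telescope} => [|n]; first by rewrite !big_geq.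
  by rewrite big_nat_recr //= subnn mulr0n addr0.
rewrite big_split /= telescope drop_last IHn big_nat_recr //= mulrSr opprD.
by rewrite addrACA.
Qed.

Definition unbarred_ind (x : letter) : int := if barred x then 0 else 1.

Lemma Hfun_barred_change (x y : letter) : barred x != barred y ->
  1 - 2 * Hfun x y = unbarred_ind x - unbarred_ind y.
Proof. by case: x => a; case: y => b. Qed.

Lemma sum_barred_changes (x : seq letter) (n : nat) :
  \sum_(1 <= i < n | barred (nth dflt_letter x i.-1) != barred (nth dflt_letter x i))
      (Posz (n - i) * (1 - 2 * Hfun (nth dflt_letter x i.-1) (nth dflt_letter x i)))
  = \sum_(1 <= i < n)
      (unbarred_ind (nth dflt_letter x i.-1) - unbarred_ind (nth dflt_letter x i)) *+ (n - i).
Proof.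
rewrite big_mkcond; apply: eq_bigr => i _; rewrite -natz mulr_natl.
case: ifPn => [/Hfun_barred_change -> //|].
by rewrite negbK /unbarred_ind => /eqP ->; rewrite subrr mul0rn.
Qed.

Lemma partition_vec_ge0 (n : nat) (v : nat -> int) :
  is_partition_vec n v -> forall k, (1 <= k <= n)%N -> 0 <= v k.
Proof.
case=> v_decr v_n_ge0 k /andP[k_ge1 k_le_n].
suff v_tail_ge0 : forall d, (d < n)%N -> 0 <= v (n - d)%N.
  by have := v_tail_ge0 (n - k)%N; rewrite subKn //; apply; lia.
elim=> [|d IHd] lt_dn; first by rewrite subn0.
apply: le_trans (IHd (ltnW lt_dn)) _.
have -> : (n - d = (n - d.+1).+1)%N by lia.
by apply: v_decr; lia.
Qed.

Lemma in_E_head_unbarred (n : nat) (lam : seq nat) (x : seq letter) :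
  in_E n.+1 lam x -> ~~ barred (nth dflt_letter x 0).
Proof.
case=> size_x [valid_x [partial_partition _]].
have w1_ge0 := partition_vec_ge0 (partial_partition 1%N isT).
have : valid_letter n.+1 (nth dflt_letter x 0) by apply: (all_nthP _ valid_x); rewrite size_x.
case x0: (nth dflt_letter x 0) => [//|b] b_valid.
by have := w1_ge0 b b_valid; rewrite /partial_wt big_ord1 x0 /= eqxx.
Qed.

Lemma sum_wt_coord (n : nat) (a : letter) : valid_letter n a ->
  \sum_(1 <= k < n.+1) wt_coord a k = 2 * unbarred_ind a - 1.
Proof.
have sum_delta : forall b, (1 <= b <= n)%N -> \sum_(1 <= k < n.+1) Posz (b == k) = 1.
  move=> b b_valid; rewrite (bigD1_seq b) /=; last exact: iota_uniq.
    by rewrite eqxx big1 ?addr0 // => k /negbTE; rewrite eq_sym => ->.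
  by rewrite mem_index_iota; lia.
by case: a => b /sum_delta; rewrite /= ?sumrN => ->.
Qed.

Lemma sumn_in_E (n : nat) (lam : seq nat) (x : seq letter) :
  (size lam <= n)%N -> in_E n lam x ->
  Posz (sumn lam) = \sum_(0 <= j < n) (2 * unbarred_ind (nth dflt_letter x j) - 1).
Proof.
move=> size_lam [size_x [valid_x [_ final_wt]]].
have sumn_final : Posz (sumn lam) = \sum_(1 <= k < n.+1) partial_wt x n k.
  rewrite (eq_big_nat _ _ (F2 := fun k => Posz (nth 0%N lam k.-1))); last first.
    by move=> k k_valid; rewrite final_wt.
  rewrite big_add1 /= sumnE (big_nth 0%N) (big_morph Posz PoszD (erefl (Posz 0))).
  rewrite [RHS](big_cat_nat _ size_lam) //= [X in _ = _ + X]big1_seq ?addr0 //.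
  by move=> i /andP[_]; rewrite mem_index_iota => /andP[i_ge _]; rewrite nth_default.
rewrite sumn_final /partial_wt exchange_big /= big_mkord; apply: eq_bigr => j _.
by rewrite sum_wt_coord //; apply: (all_nthP _ valid_x); rewrite size_x.
Qed.

Lemma intr_half (F : numFieldType) (z : int) (a b : nat) :
  2 * z = a%:Z - b%:Z -> z%:~R = (a%:R - b%:R) / 2 :> F.
Proof.
move=> double_z.
rewrite -[a%:R]/((a%:Z)%:~R : F) -[b%:R]/((b%:Z)%:~R : F) -intrB -double_z intrM.
by field.
Qed.

Theorem mainTheorem11 (n : nat) (lam : seq nat) (x : seq letter) :
  partition_atmost n lam -> in_E n lam x ->
  ((\sum_(1 <= i < n | barred (nth dflt_letter x i.-1) != barred (nth dflt_letter x i))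
      (Posz (n - i) * (1 - 2 * Hfun (nth dflt_letter x i.-1) (nth dflt_letter x i)))%R)%:~R
   = ((n%:R - (sumn lam)%:R) / 2 : rat))%R.
Proof.
case=> _ [_ size_lam] x_in_E; apply: intr_half.
set u := fun j => unbarred_ind (nth dflt_letter x j).
have head_term : u 0%N *+ n = n%:Z.
  case: n x_in_E {size_lam} => // n /in_E_head_unbarred.
  by rewrite /u /unbarred_ind => /negbTE ->; rewrite natz.
rewrite sum_barred_changes (sumr_weighted_diffs u) head_term (sumn_in_E size_lam x_in_E).
by rewrite sumrB -mulr_sumr sumr_const_nat subn0; ring.
Qed.
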